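(* Let $f\colon\mathbb{R}\to\mathbb{R}$ have the Baire property, let $I$ be an open interval and let $\varepsilon\ge 0$. The following are equivalent: (i) $f$ satisfies the condition $S(I,A,\varepsilon)$ for every residual set $A\subset\mathbb{R}$; (ii) $f$ satisfies $S(I,A,\varepsilon)$ for every residual set $A\subset\mathbb{R}$ such that $f\restriction A$ is continuous; (iii) there exists a residual set $A\subset\mathbb{R}$ such that $f\restriction A$ is continuous and $f$ satisfies $S(I,A,\varepsilon)$.
   Context: For $a,b\in\mathbb{R}$, $I(a,b)$ denotes the open interval with end-points $a$ and $b$. For $A\subset\mathbb{R}$, an interval $J\subset\mathbb{R}$ and $\varepsilon\ge0$, a function $f\colon\mathbb{R}\to\mathbb{R}$ satisfies the condition $S(J,A,\varepsilon)$ if for all $a,b\in J$ with $f(a)<f(b)$ there exists $x\in A\cap I(a,b)$ with $f(x)\in(f(a)-\varepsilon,f(b)+\varepsilon)$. A function has the Baire property if preimages of open sets have the Baire property; a set is residual if its complement is meager. *)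

From Stdlib Require Import Reals Lra.
Open Scope R_scope.

Definition Iab (a b x : R) : Prop := Rmin a b < x < Rmax a b.

(* Open intervals (possibly unbounded): endpoints in the extended reals,
   None on the left = -oo, None on the right = +oo. *)
Definition oint (lo hi : option R) : R -> Prop := fun x =>
  match lo with Some a => a < x | None => True end /\
  match hi with Some b => x < b | None => True end.

Definition cond_S (f : R -> R) (J A : R -> Prop) (eps : R) : Prop :=
  forall a b, J a -> J b -> f a < f b ->
    exists x, A x /\ Iab a b x /\ f a - eps < f x < f b + eps.

Definition is_open (U : R -> Prop) : Prop :=
  forall x, U x -> exists d, 0 < d /\ forall y, Rabs (y - x) < d -> U y.

Definition closure (N : R -> Prop) (x : R) : Prop :=
  forall d, 0 < d -> exists y, N y /\ Rabs (y - x) < d.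

Definition nowhere_dense (N : R -> Prop) : Prop :=
  ~ exists x d, 0 < d /\ forall y, Rabs (y - x) < d -> closure N y.

Definition meager (M : R -> Prop) : Prop :=
  exists Ns : nat -> (R -> Prop),
    (forall n, nowhere_dense (Ns n)) /\
    forall x, M x -> exists n, Ns n x.

Definition residual (A : R -> Prop) : Prop := meager (fun x => ~ A x).

Definition set_Baire (B : R -> Prop) : Prop :=
  exists U, is_open U /\ meager (fun x => (B x /\ ~ U x) \/ (U x /\ ~ B x)).

Definition fun_Baire (f : R -> R) : Prop :=
  forall U, is_open U -> set_Baire (fun x => U (f x)).

Definition cont_on_restr (f : R -> R) (A : R -> Prop) : Prop :=
  forall x, A x -> forall e, 0 < e -> exists d, 0 < d /\
    forall y, A y -> Rabs (y - x) < d -> Rabs (f y - f x) < e.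

(* The implication (i) => (ii) is trivial and (ii) => (iii) only needs one residual set on
   which f is continuous; such a set exists because f has the Baire property: for each ball
   B_n of a countable base, f^-1(B_n) differs from an open set U_n by a meager set, and off
   the union of these meager sets f^-1(B_n) is relatively open, i.e. f is continuous.
   For (iii) => (i), let A0 witness (iii), A be residual and f a < f b.  Condition S for A0
   gives x in A0 strictly between a and b with f x in (f a - eps, f b + eps); by continuity
   of f on A0 and the Baire category theorem, a point of the dense set A /\ A0 close enough
   to x does the same job. *)
From Stdlib Require Import Reals Lra Lia Cantor ClassicalEpsilon Classical.
Open Scope R_scope.

Lemma meager_subset (M M' : R -> Prop) :
  meager M -> (forall x, M' x -> M x) -> meager M'.
Proof.
intros [Ns [HNs Hcov]] Hsub. exists Ns. split; auto.
Qed.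

Lemma meager_countable_union (M : nat -> R -> Prop) :
  (forall n, meager (M n)) -> meager (fun x => exists n, M n x).
Proof.
intros HM. destruct (choice _ HM) as [G HG].
exists (fun k => G (fst (Cantor.of_nat k)) (snd (Cantor.of_nat k))). split.
- intro k. apply HG.
- intros x [n Hn]. destruct (proj2 (HG n) x Hn) as [m Hm].
  exists (Cantor.to_nat (n, m)). rewrite Cantor.cancel_of_to. exact Hm.
Qed.

Lemma residual_and (A B : R -> Prop) :
  residual A -> residual B -> residual (fun x => A x /\ B x).
Proof.
intros HA HB.
apply meager_subset
  with (fun x => exists n, (if Nat.eqb n 0 then ~ A x else ~ B x)).
- apply meager_countable_union. intros [|n]; assumption.
- intros x Hx. destruct (classic (A x)) as [Ha|Ha].
  + exists 1%nat. intro Hb. apply Hx. auto.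
  + exists 0%nat. exact Ha.
Qed.

Lemma nowhere_dense_avoid_interval (N : R -> Prop) (a b : R) :
  nowhere_dense N -> a < b ->
  exists a' b', a <= a' /\ a' < b' /\ b' <= b /\ forall z, a' <= z <= b' -> ~ N z.
Proof.
intros HN Hab.
assert (Hy : exists y, Rabs (y - (a + b) / 2) < (b - a) / 2 /\ ~ closure N y).
{ apply NNPP; intro Hc. apply HN. exists ((a + b) / 2), ((b - a) / 2).
  split; [lra|]. intros y Hy. apply NNPP; intro Hy'. apply Hc. exists y; auto. }
destruct Hy as [y [Hy Hcl]].
assert (Hd : exists d, 0 < d /\ forall z, N z -> d <= Rabs (z - y)).
{ apply NNPP; intro Hc. apply Hcl. intros d Hd. apply NNPP; intro Hc'.
  apply Hc. exists d. split; auto. intros z Hz. apply Rnot_lt_le. intro Hlt.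
  apply Hc'. exists z; auto. }
destruct Hd as [d [Hd Hfar]].
set (r := Rmin (d / 2) (((b - a) / 2 - Rabs (y - (a + b) / 2)) / 2)).
assert (Hr_d : r <= d / 2) by apply Rmin_l.
assert (Hr_ab : r <= ((b - a) / 2 - Rabs (y - (a + b) / 2)) / 2) by apply Rmin_r.
assert (Hr : 0 < r) by (apply Rmin_pos; lra).
pose proof (Rle_abs (y - (a + b) / 2)) as Habs.
pose proof (Rle_abs (- (y - (a + b) / 2))) as Habs'. rewrite Rabs_Ropp in Habs'.
exists (y - r), (y + r). repeat split; try lra.
intros z Hz HNz. specialize (Hfar z HNz).
assert (Rabs (z - y) <= r) by (apply Rabs_le; lra). lra.
Qed.

Lemma nested_intervals_common_point (a b : nat -> R) :
  (forall n, a n <= a (S n)) -> (forall n, b (S n) <= b n) -> (forall n, a n <= b n) ->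
  exists L, forall n, a n <= L <= b n.
Proof.
intros Ha Hb Hab.
assert (Hmono : forall n m, (n <= m)%nat -> a n <= a m /\ b m <= b n).
{ intros n m Hnm. induction Hnm as [|m _ IH]; [lra|].
  specialize (Ha m). specialize (Hb m). lra. }
assert (Hcross : forall n m, a n <= b m).
{ intros n m. pose proof (Hab n). pose proof (Hab m).
  destruct (Nat.le_ge_cases n m) as [Hnm|Hmn]; [destruct (Hmono _ _ Hnm) | destruct (Hmono _ _ Hmn)]; lra. }
set (E := fun r => exists n, r = a n).
destruct (completeness E) as [L [HLub HLleast]].
- exists (b 0%nat). intros r [n ->]. apply Hcross.
- exists (a 0%nat), 0%nat. reflexivity.
- exists L. intro n. split.
  + apply HLub. exists n. reflexivity.
  + apply HLleast. intros r [k ->]. apply Hcross.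
Qed.

Lemma residual_dense (A : R -> Prop) :
  residual A -> forall x d, 0 < d -> exists y, A y /\ Rabs (y - x) < d.
Proof.
intros [Ns [HNs Hcov]] x d Hd.
assert (Hstep : forall (n : nat) (p : R * R), exists q : R * R,
  fst p < snd p -> fst p <= fst q /\ fst q < snd q /\ snd q <= snd p /\
    forall z, fst q <= z <= snd q -> ~ Ns n z).
{ intros n [a b]. destruct (Rlt_dec a b) as [Hab|Hab].
  - destruct (nowhere_dense_avoid_interval (Ns n) a b (HNs n) Hab) as [a' [b' Hq]].
    exists (a', b'). exact (fun _ => Hq).
  - exists (0, 0). intro. contradiction. }
destruct (choice _ (fun n => choice _ (Hstep n))) as [g Hg].
pose (s := fix s n := match n with O => (x - d / 2, x + d / 2) | S k => g k (s k) end).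
assert (Hs : forall n, fst (s n) < snd (s n)).
{ induction n as [|n IH]; simpl; [lra|]. apply (Hg n (s n) IH). }
destruct (nested_intervals_common_point (fun n => fst (s n)) (fun n => snd (s n)))
  as [L HL].
- intro n. apply (Hg n (s n) (Hs n)).
- intro n. apply (Hg n (s n) (Hs n)).
- intro n. apply Rlt_le, Hs.
- exists L. split.
  + apply NNPP; intro HnA. destruct (Hcov L HnA) as [n Hn].
    apply (proj2 (proj2 (proj2 (Hg n (s n) (Hs n)))) L (HL (S n))). exact Hn.
  + specialize (HL 0%nat). simpl in HL. apply Rabs_def1; lra.
Qed.

Lemma ball_open (c r : R) : is_open (fun t => Rabs (t - c) < r).
Proof.
intros x Hx. exists (r - Rabs (x - c)). split; [lra|].
intros y Hy. pose proof (Rabs_triang (y - x) (x - c)) as Htri.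
replace (y - x + (x - c)) with (y - c) in Htri by ring. lra.
Qed.

(* An enumeration of the balls with centre (k - m)/(j+1) and radius 2/(j+1), for all
   naturals j, k, m, read off from n through the Cantor pairing. *)
Definition base_center (n : nat) : R :=
  let '(j, km) := Cantor.of_nat n in let '(k, m) := Cantor.of_nat km in
  (INR k - INR m) / INR (S j).

Definition base_radius (n : nat) : R :=
  let '(j, _) := Cantor.of_nat n in 2 / INR (S j).

Lemma IZR_INR_sub (z : Z) : IZR z = INR (Z.to_nat z) - INR (Z.to_nat (- z)).
Proof.
rewrite !INR_IZR_INZ, <- minus_IZR. f_equal. lia.
Qed.

Lemma base_ball_inside (c e : R) : 0 < e -> exists n,
  Rabs (c - base_center n) < base_radius n /\
  forall t, Rabs (t - base_center n) < base_radius n -> Rabs (t - c) < e.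
Proof.
intros He. destruct (archimed_cor1 (e / 3)) as [N [HN HN0]]; [lra|].
destruct N as [|j]; [lia|].
assert (Hj : 0 < INR (S j)) by (apply lt_0_INR; lia).
set (z := up (c * INR (S j))).
destruct (archimed (c * INR (S j))) as [Hz1 Hz2]. fold z in Hz1, Hz2.
exists (Cantor.to_nat (j, Cantor.to_nat (Z.to_nat z, Z.to_nat (- z)))).
unfold base_center, base_radius. rewrite !Cantor.cancel_of_to, <- IZR_INR_sub.
assert (Hc : Rabs (c - IZR z / INR (S j)) <= 1 / INR (S j)).
{ apply Rabs_le. split; apply Rmult_le_reg_r with (INR (S j)); auto;
  field_simplify; lra. }
assert (H3 : 2 / INR (S j) + 1 / INR (S j) < e).
{ replace (2 / INR (S j) + 1 / INR (S j)) with (3 * / INR (S j)) by (field; lra). lra. }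
assert (0 < 1 / INR (S j)) by (apply Rdiv_lt_0_compat; lra).
split.
- replace (2 / INR (S j)) with (2 * (1 / INR (S j))) by (field; lra). lra.
- intros t Ht. rewrite Rabs_minus_sym in Hc.
  pose proof (Rabs_triang (t - IZR z / INR (S j)) (IZR z / INR (S j) - c)) as Htri.
  replace (t - IZR z / INR (S j) + (IZR z / INR (S j) - c)) with (t - c) in Htri by ring.
  lra.
Qed.

Lemma Baire_function_continuous_on_residual (f : R -> R) :
  fun_Baire f -> exists A, residual A /\ cont_on_restr f A.
Proof.
intros Hf.
set (B n := fun x => Rabs (f x - base_center n) < base_radius n).
destruct (choice _ (fun n => Hf _ (ball_open (base_center n) (base_radius n))))
  as [U HU].
set (bad n := fun x => (B n x /\ ~ U n x) \/ (U n x /\ ~ B n x)).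
exists (fun x => ~ exists n, bad n x). split.
- apply meager_subset with (fun x => exists n, bad n x).
  + apply meager_countable_union. intro n. apply (HU n).
  + intros x Hx. apply NNPP. exact Hx.
- intros x Hx e He.
  destruct (base_ball_inside (f x) e He) as [n [Hfx Hball]].
  assert (HUx : U n x) by (apply NNPP; intro HnU; apply Hx; exists n; left; split; auto).
  destruct (proj1 (HU n) x HUx) as [d [Hd HdU]].
  exists d. split; auto. intros y Hy Hyx. apply Hball.
  apply NNPP; intro HnB. apply Hy. exists n. right. split; auto.
Qed.

Lemma cond_S_residual_of_continuous (f : R -> R) (J A0 : R -> Prop) (eps : R) :
  residual A0 -> cont_on_restr f A0 -> cond_S f J A0 eps ->
  forall A, residual A -> cond_S f J A eps.
Proof.
intros HA0 Hcont HS A HA a b Ha Hb Hfab.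
destruct (HS a b Ha Hb Hfab) as [x [HxA0 [[Hxa Hxb] [Hfxa Hfxb]]]].
destruct (Hcont x HxA0 (Rmin (f x - (f a - eps)) (f b + eps - f x)))
  as [d1 [Hd1 Hclose]]; [apply Rmin_pos; lra|].
set (d := Rmin d1 (Rmin (x - Rmin a b) (Rmax a b - x))).
assert (Hd : 0 < d) by (apply Rmin_pos; [lra | apply Rmin_pos; lra]).
destruct (residual_dense _ (residual_and _ _ HA HA0) x d Hd) as [y [[HyA HyA0] Hyx]].
assert (d <= d1) by apply Rmin_l.
assert (d <= Rmin (x - Rmin a b) (Rmax a b - x)) by apply Rmin_r.
assert (Rmin (x - Rmin a b) (Rmax a b - x) <= x - Rmin a b) by apply Rmin_l.
assert (Rmin (x - Rmin a b) (Rmax a b - x) <= Rmax a b - x) by apply Rmin_r.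
specialize (Hclose y HyA0 ltac:(lra)).
assert (Rmin (f x - (f a - eps)) (f b + eps - f x) <= f x - (f a - eps)) by apply Rmin_l.
assert (Rmin (f x - (f a - eps)) (f b + eps - f x) <= f b + eps - f x) by apply Rmin_r.
apply Rabs_def2 in Hyx. apply Rabs_def2 in Hclose.
exists y. unfold Iab. repeat split; auto; lra.
Qed.

Theorem lemma2 (f : R -> R) (lo hi : option R) (eps : R) :
  fun_Baire f -> 0 <= eps ->
  ((forall A, residual A -> cond_S f (oint lo hi) A eps) <->
   (forall A, residual A -> cont_on_restr f A ->
      cond_S f (oint lo hi) A eps)) /\
  ((forall A, residual A -> cont_on_restr f A ->
      cond_S f (oint lo hi) A eps) <->
   (exists A, residual A /\ cont_on_restr f A /\
      cond_S f (oint lo hi) A eps)).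
Proof.
intros Hf _.
destruct (Baire_function_continuous_on_residual f Hf) as [A0 [HA0 Hcont0]].
assert (Hiii_i : (exists A, residual A /\ cont_on_restr f A /\ cond_S f (oint lo hi) A eps) ->
  forall A, residual A -> cond_S f (oint lo hi) A eps).
{ intros [A [HA [Hcont HS]]]. exact (cond_S_residual_of_continuous f _ A eps HA Hcont HS). }
split; split.
- intros Hi A HA _. exact (Hi A HA).
- intros Hii. apply Hiii_i. exists A0. auto.
- intros Hii. exists A0. auto.
- intros Hiii A HA _. exact (Hiii_i Hiii A HA).
Qed.
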